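(* There is an absolute constant $C$ such that for all integers $1\le k<d$ and $n\ge1$ and every $B\in\mathbb R^{n\times d}$, there exist $k$ distinct standard basis vectors of $\mathbb R^d$ such that the matrix $P\in\mathbb R^{d\times k}$ having them as columns satisfies \[\|B-(BP)(BP)^\dagger B\|_F^2\le C\,kd\,\|B-[B]_k\|_F^2.\]
   Context: $M^\dagger$ denotes the Moore–Penrose pseudo-inverse, and $[B]_k$ denotes a best approximation of $B$ of rank at most $k$ in Frobenius norm. *)

From HB Require Import structures.
From mathcomp Require Import all_boot all_order all_algebra.
From mathcomp Require Import Rstruct.
From Stdlib Require Import ClassicalEpsilon.
From Stdlib Require Reals.
Set Implicit Arguments. Unset Strict Implicit. Unset Printing Implicit Defensive.
Import Order.TTheory GRing.Theory Num.Theory.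
Local Open Scope ring_scope.

Notation RR := Reals.Rdefinitions.R.

Definition frob2 (m n : nat) (A : 'M[RR]_(m, n)) : RR :=
  \sum_(i < m) \sum_(j < n) A i j ^+ 2.

(* Penrose conditions (real matrices: adjoint = transpose). *)
Definition is_pinv (m n : nat) (A : 'M[RR]_(m, n)) (X : 'M[RR]_(n, m)) : Prop :=
  [/\ A *m X *m A = A, X *m A *m X = X,
      (A *m X)^T = A *m X & (X *m A)^T = X *m A].

Definition pinv (m n : nat) (A : 'M[RR]_(m, n)) : 'M[RR]_(n, m) :=
  epsilon (inhabits 0) (is_pinv A).

Definition is_best_rank_approx (m n k : nat) (B M : 'M[RR]_(m, n)) : Prop :=
  (\rank M <= k)%N /\
  forall N : 'M[RR]_(m, n), (\rank N <= k)%N -> frob2 (B - M) <= frob2 (B - N).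

Definition best_rank_approx (m n : nat) (k : nat) (B : 'M[RR]_(m, n)) : 'M[RR]_(m, n) :=
  epsilon (inhabits 0) (is_best_rank_approx k B).

Definition sel_mx (d k : nat) (f : 'I_k -> 'I_d) : 'M[RR]_(d, k) :=
  \matrix_(i < d, j < k) (i == f j)%:R.

(* Let N := [B]_k.  It has rank at most k, so N = L G with G a row-free k x d
   matrix.  Choosing the k columns of G that span a parallelotope of maximal
   volume, Cramer's rule writes G = (G P) C with every |C i j| <= 1; hence
   N P C = N, and B - (B P) C = E - (E P) C for E := B - N.  By Cauchy-Schwarz
   the latter has squared Frobenius norm at most (k+1)(d+1) |E|^2 <= 4 k d |E|^2,
   and (B P)(B P)^+ B is the best approximation of B by matrices (B P) Y. *)

From Pilot Require Import Defs.
From HB Require Import structures.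
From mathcomp Require Import all_boot all_order all_algebra.
From mathcomp Require Import Rstruct.
From Stdlib Require Import ClassicalEpsilon.
From mathcomp Require Import all_classical all_reals all_analysis.
From mathcomp Require Import Rstruct_topology.
From mathcomp Require Import lra zify.
Import Pilot.Defs.
Import Order.TTheory GRing.Theory Num.Theory.
Import numFieldNormedType.Exports.
Set Implicit Arguments. Unset Strict Implicit. Unset Printing Implicit Defensive.
Local Open Scope ring_scope.

Lemma frob2_ge0 m n (X : 'M[RR]_(m, n)) : 0 <= frob2 X.
Proof. by apply: sumr_ge0 => i _; apply: sumr_ge0 => j _; apply: sqr_ge0. Qed.

Lemma frob2E m n (X : 'M[RR]_(m, n)) : frob2 X = \tr (X^T *m X).
Proof.
rewrite /frob2 /mxtrace exchange_big /=; apply: eq_bigr => j _.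
by rewrite mxE; apply: eq_bigr => i _; rewrite !mxE expr2.
Qed.

Lemma frob2D_orth m n (P S : 'M[RR]_(m, n)) :
  P^T *m S = 0 -> frob2 (P + S) = frob2 P + frob2 S.
Proof.
move=> PS; have SP : S^T *m P = 0 by rewrite -[P]trmxK -trmx_mul PS trmx0.
by rewrite !frob2E [(P + S)^T]linearD /= mulmxDl !mulmxDr PS SP addr0 add0r mxtraceD.
Qed.

Lemma entry_sqr_le_frob2 m n (X : 'M[RR]_(m, n)) i j : X i j ^+ 2 <= frob2 X.
Proof.
rewrite /frob2 (bigD1 i) //= (bigD1 j) //= -addrA lerDl.
apply: addr_ge0; first by apply: sumr_ge0 => l _; apply: sqr_ge0.
by apply: sumr_ge0 => l _; apply: sumr_ge0 => t _; apply: sqr_ge0.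
Qed.

Lemma sqr_sum_le (m : nat) (y : 'I_m -> RR) :
  (\sum_i y i) ^+ 2 <= m%:R * \sum_i y i ^+ 2.
Proof.
elim: m y => [|[|m] IH] y; first by rewrite !big_ord0 expr0n /= mul0r.
  by rewrite !big_ord1 mul1r.
rewrite big_ord_recr [X in _ <= _ * X]big_ord_recr /= -[m.+2%:R]natr1.
have := IH (fun i => y (widen_ord (leqnSn m.+1) i)).
set s := \sum_(i < m.+1) _; set Q := \sum_(i < m.+1) _; set z := y ord_max => sQ.
have mpos : 0 < m.+1%:R :> RR by rewrite ltr0n.
(* [m.+1] times the gap dominates [(s - m.+1 z)^2], since [s^2 <= m.+1 Q]. *)
have gap : 0 <= m.+1%:R * ((m.+1%:R + 1) * (Q + z ^+ 2) - (s + z) ^+ 2).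
  have := sqr_ge0 (s - m.+1%:R * z); nra.
by move: gap; rewrite (pmulr_rge0 _ mpos) subr_ge0.
Qed.

Lemma row_free_gram_unit r n (G : 'M[RR]_(r, n)) : row_free G -> G *m G^T \in unitmx.
Proof.
move=> fG; rewrite -row_free_unit; apply: inj_row_free => v.
rewrite mulmxA => vGG; apply/eqP; rewrite -(mulmx_free_eq0 _ fG).
have : frob2 (v *m G)^T == 0.
  by rewrite frob2E trmxK trmx_mul mulmxA vGG mul0mx mxtrace0.
rewrite psumr_eq0 => [/allP frob0|]; last first.
  by move=> *; apply: sumr_ge0 => *; apply: sqr_ge0.
apply/eqP/matrixP => i j; have := frob0 j (mem_index_enum _).
rewrite psumr_eq0 => [/allP/(_ i (mem_index_enum _))|]; last first.
  by move=> *; apply: sqr_ge0.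
by rewrite !mxE sqrf_eq0 => /eqP.
Qed.

Lemma is_pinv_rank_factor m n r (F : 'M[RR]_(m, r)) (G : 'M[RR]_(r, n)) :
  F^T *m F \in unitmx -> G *m G^T \in unitmx ->
  is_pinv (F *m G) (G^T *m invmx (G *m G^T) *m invmx (F^T *m F) *m F^T).
Proof.
move=> uF uG; set iG := invmx (G *m G^T); set iF := invmx (F^T *m F).
have AX : F *m G *m (G^T *m iG *m iF *m F^T) = F *m iF *m F^T.
  by rewrite -!mulmxA (mulmxA G) (mulmxA (G *m G^T)) mulmxV // mul1mx.
have XA : G^T *m iG *m iF *m F^T *m (F *m G) = G^T *m iG *m G.
  by rewrite !mulmxA -(mulmxA _ F^T) -(mulmxA _ iF) mulVmx // mulmx1.
have iFT : iF^T = iF by rewrite /iF trmx_inv trmx_mul trmxK.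
have iGT : iG^T = iG by rewrite /iG trmx_inv trmx_mul trmxK.
split.
- by rewrite AX !mulmxA -(mulmxA _ F^T) -(mulmxA _ iF) mulVmx // mulmx1.
- by rewrite XA -!mulmxA (mulmxA G) (mulmxA (G *m G^T)) mulmxV // mul1mx.
- by rewrite AX !trmx_mul trmxK iFT mulmxA.
- by rewrite XA !trmx_mul trmxK iGT mulmxA.
Qed.

Lemma pinvP m n (A : 'M[RR]_(m, n)) : is_pinv A (pinv A).
Proof.
rewrite /pinv; apply: epsilon_spec; rewrite -(mulmx_base A).
eexists; apply: is_pinv_rank_factor; last exact/row_free_gram_unit/row_base_free.
rewrite -[X in _ *m X]trmxK; apply/row_free_gram_unit.
by rewrite /row_free mxrank_tr; apply: col_base_full.
Qed.

(* [A A^+] is the orthogonal projection onto the column space of [A], so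
   Pythagoras splits [M - A Y] into the residual of [M] and a term in that space. *)
Lemma pinv_residual_min m n p (A : 'M[RR]_(m, n)) (X : 'M[RR]_(n, m))
    (M : 'M[RR]_(m, p)) (Y : 'M[RR]_(n, p)) :
  is_pinv A X -> frob2 (M - A *m X *m M) <= frob2 (M - A *m Y).
Proof.
case=> AXA _ AXT _; set Q := A *m X.
have QQ : Q *m Q = Q by rewrite /Q mulmxA AXA.
have QT : (1%:M - Q)^T = 1%:M - Q by rewrite linearB /= trmx1 AXT.
set W := M - A *m Y.
have MW : M - Q *m M = (1%:M - Q) *m W.
  by rewrite /W mulmxBl mul1mx !mulmxBr mulmxA AXA opprB addrA subrK.
have WD : W = (1%:M - Q) *m W + Q *m W by rewrite -mulmxDl subrK mul1mx.
have orth : ((1%:M - Q) *m W)^T *m (Q *m W) = 0.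
  by rewrite trmx_mul QT -mulmxA (mulmxA _ Q) mulmxBl mul1mx QQ subrr mul0mx mulmx0.
by rewrite MW [in X in _ <= X]WD frob2D_orth // lerDl frob2_ge0.
Qed.

Lemma mul_sel_mxE n d k (E : 'M[RR]_(n, d)) (f : 'I_k -> 'I_d) p i :
  (E *m sel_mx f) p i = E p (f i).
Proof.
rewrite mxE (bigD1 (f i)) //= mxE eqxx mulr1 big1 ?addr0 // => l /negbTE fil.
by rewrite mxE fil mulr0.
Qed.

Lemma sum_inj_le k d (f : 'I_k -> 'I_d) (F : 'I_d -> RR) :
  injective f -> (forall j, 0 <= F j) -> \sum_i F (f i) <= \sum_j F j.
Proof.
move=> injf F0; rewrite -(big_imset _ (in2W injf)) /=.
rewrite [leRHS](bigID (mem (f @: xpredT))) /= lerDl.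
by apply: sumr_ge0 => j _.
Qed.

Lemma frob2_sub_sel_coef_le n d k (E : 'M[RR]_(n, d)) (f : 'I_k -> 'I_d)
    (C : 'M[RR]_(k, d)) :
  injective f -> (forall i j, `|C i j| <= 1) ->
  frob2 (E - E *m sel_mx f *m C) <= (k.+1 * d.+1)%:R * frob2 E.
Proof.
move=> injf C1; rewrite /frob2 mulr_sumr; apply: ler_sum => p _.
pose rowf := \sum_i E p (f i) ^+ 2.
have entry j : (E - E *m sel_mx f *m C) p j ^+ 2 <= k.+1%:R * (E p j ^+ 2 + rowf).
  rewrite !mxE; under eq_bigr do rewrite mul_sel_mxE.
  (* Cauchy-Schwarz for the [k.+1] terms [E p j] and [- E p (f i) * C i j]. *)
  have := sqr_sum_le (fun i : 'I_k.+1 => if unlift ord0 i is Some i'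
                                        then - (E p (f i') * C i' j) else E p j).
  rewrite !big_ord_recl /= !unlift_none.
  under eq_bigr do rewrite liftK.
  under [in X in _ <= _ * X]eq_bigr do rewrite liftK.
  rewrite sumrN => /le_trans; apply; rewrite ler_wpM2l // lerD2l.
  apply: ler_sum => i _; rewrite sqrrN exprMn ler_piMr ?sqr_ge0 //.
  by rewrite -(expr1n _ 2) -real_normK ?num_real // lerXn2r ?nnegrE.
apply: le_trans (ler_sum _ (fun j _ => entry j)) _.
rewrite -mulr_sumr big_split /= sumr_const card_ord natrM -mulrA ler_wpM2l //.
rewrite -[d.+1%:R]natr1 mulrDl mul1r addrC lerD2r -[rowf *+ d]mulr_natl.
rewrite ler_wpM2l //.
by apply: sum_inj_le => // j; apply: sqr_ge0.
Qed.

Lemma invmx_mulmx_cramer (F : fieldType) n (M : 'M[F]_n) (v : 'cV[F]_n) i :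
  M \in unitmx ->
  (invmx M *m v) i 0 =
    \det (\matrix_(a, b) if b == i then v a 0 else M a b) / \det M.
Proof.
set N := \matrix_(a, b) _ => uM.
rewrite mxE (expand_det_col N i) mulr_suml; apply: eq_bigr => l _.
have -> : cofactor N l i = cofactor M l i.
  congr (_ * \det _); apply/matrixP => a b.
  by rewrite !mxE eq_sym (negbTE (neq_lift _ _)).
by rewrite /invmx uM !mxE eqxx mulrC mulrA mulrAC.
Qed.

Lemma maxvol_sel_coef r d (G : 'M[RR]_(r, d)) : row_free G ->
  exists2 g : 'I_r -> 'I_d, injective g &
    exists2 C : 'M[RR]_(r, d), G = G *m sel_mx g *m C &
      forall i j, `|C i j| <= 1.
Proof.
move=> fG; have fGT : row_full G^T by rewrite /row_full mxrank_tr.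
have selT (h : 'I_r -> 'I_d) : G *m sel_mx h = (rowsub h G^T)^T.
  by apply/matrixP => a b; rewrite mul_sel_mxE !mxE.
pose vol (h : {ffun 'I_r -> 'I_d}) := `|\det (G *m sel_mx h)|.
have [g _ gmax] := @arg_maxP _ RR _ (fullrankfun fGT) xpredT vol isT.
have vol_gt0 : 0 < vol g.
  apply: lt_le_trans (gmax _ isT); rewrite normr_gt0 -unitfE -unitmxE selT.
  by rewrite unitmx_tr; apply: fullrowsub_unit.
set M := G *m sel_mx g.
have uM : M \in unitmx by rewrite unitmxE unitfE -normr_gt0.
exists g.
  move=> i i' gii'; apply/eqP/negPn/negP => ii'; move: vol_gt0.
  rewrite /vol -/M -det_tr (determinant_alternate ii') ?normr0 ?ltxx // => b.
  by rewrite /M selT trmxK !mxE gii'.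
exists (invmx M *m G); first by rewrite mulmxA mulmxV // mul1mx.
move=> i j; pose g' := [ffun t => if t == i then j else g t].
have -> : (invmx M *m G) i j = \det (G *m sel_mx g') / \det M.
  have -> : (invmx M *m G) i j = (invmx M *m col j G) i 0.
    by rewrite colE mulmxA -colE [RHS]mxE.
  rewrite invmx_mulmx_cramer //; congr (\det _ / _).
  apply/matrixP => a b.
  by rewrite [RHS]mul_sel_mxE ffunE [LHS]mxE /M mul_sel_mxE mxE; case: eqP.
by rewrite normrM normrV ?unitfE -?normr_gt0 // ler_pdivrMr // mul1r; apply: gmax.
Qed.

Lemma mxrank_leq_factor (F : fieldType) k m n (N : 'M[F]_(m, n)) :
  (\rank N <= k)%N -> (k <= n)%N ->
  exists (L : 'M[F]_(m, k)) (G : 'M[F]_(k, n)), row_free G /\ N = L *m G.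
Proof.
move=> rNk kn; exists (col_ebase N *m pid_mx (\rank N)), (pid_mx k *m row_ebase N).
split.
  by rewrite /row_free mxrankMfree ?row_free_unit ?row_ebase_unit // rank_pid_mx.
rewrite mulmxA -[col_ebase N *m _ *m _]mulmxA mul_pid_mx.
by rewrite (minn_idPl rNk) (minn_idPr rNk) mulmx_ebase.
Qed.

Lemma sel_coef_residual_le k d n (B N : 'M[RR]_(n, d)) :
  (\rank N <= k)%N -> (k <= d)%N ->
  exists2 f : 'I_k -> 'I_d, injective f & exists C : 'M[RR]_(k, d),
    frob2 (B - B *m sel_mx f *m C) <= (k.+1 * d.+1)%:R * frob2 (B - N).
Proof.
move=> rNk kd; have [L [G [fG NLG]]] := mxrank_leq_factor rNk kd.
have [f injf [C GC C1]] := maxvol_sel_coef fG.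
exists f => //; exists C.
have NC : N *m sel_mx f *m C = N by rewrite NLG -!mulmxA (mulmxA G) -GC.
have -> : B - B *m sel_mx f *m C = (B - N) - (B - N) *m sel_mx f *m C.
  by rewrite !mulmxBl NC opprB addrA subrK.
exact: frob2_sub_sel_coef_le.
Qed.

(* Gaussian elimination [N = L (pid_mx r) U] shows that the compressions [X N Y]
   of size [k.+1] detect rank [> k]. *)
Lemma mxrank_leq_compressE (F : fieldType) k m n (N : 'M[F]_(m, n)) :
  (\rank N <= k)%N <->
  forall (X : 'M[F]_(k.+1, m)) (Y : 'M[F]_(n, k.+1)), \det (X *m N *m Y) = 0.
Proof.
split=> [rNk X Y | det0].
  have : X *m N *m Y \notin unitmx.
    apply/negP => /mxrank_unit rXNY.
    have := leq_trans (mxrankM_maxl _ Y) (mxrankM_maxr X N).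
    by rewrite rXNY => /leq_trans /(_ rNk); rewrite ltnn.
  by rewrite unitmxE unitfE negbK => /eqP.
rewrite leqNgt; apply/negP => kN.
have := det0 (pid_mx k.+1 *m invmx (col_ebase N))
             (invmx (row_ebase N) *m pid_mx k.+1).
rewrite -{2}[N]mulmx_ebase !mulmxA mulmxKV ?col_ebase_unit //.
rewrite mulmxK ?row_ebase_unit //.
have rNm := rank_leq_row N; have rNn := rank_leq_col N.
rewrite !mul_pid_mx (minn_idPl kN) (minn_idPr (leq_trans kN rNm)) minnn.
by rewrite (minn_idPr (leq_trans kN rNn)) pid_mx_1 det1 => /eqP; rewrite oner_eq0.
Qed.

Section EntrywiseContinuity.
Variable T : topologicalType.

Lemma continuous_sum (I : Type) (r : seq I) (P : pred I) (F : I -> T -> RR) :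
  (forall i, continuous (F i)) -> continuous (fun t => \sum_(i <- r | P i) F i t).
Proof.
by move=> F_cont; apply: continuous_big => [|i _]; [exact: (@add_continuous RR^o)|].
Qed.

Lemma continuous_prod (I : Type) (r : seq I) (P : pred I) (F : I -> T -> RR) :
  (forall i, continuous (F i)) -> continuous (fun t => \prod_(i <- r | P i) F i t).
Proof. by move=> F_cont; apply: continuous_big => [|i _]; [exact: mul_continuous|]. Qed.

Lemma continuous_det n (M : T -> 'M[RR]_n) :
  (forall i j, continuous (fun t => M t i j)) -> continuous (fun t => \det (M t)).
Proof.
move=> M_cont; apply: continuous_sum => s t; apply: (@continuousM RR T).
  exact: cst_continuous.
by apply: continuous_prod => i; apply: M_cont.
Qed.

Lemma continuous_frob2 m n (M : T -> 'M[RR]_(m, n)) :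
  (forall i j, continuous (fun t => M t i j)) -> continuous (fun t => frob2 (M t)).
Proof.
move=> M_cont; apply: continuous_sum => i; apply: continuous_sum => j t.
by apply: (@continuousM RR T); apply: M_cont.
Qed.

Lemma continuous_mulmx_entry m n p q (X : 'M[RR]_(p, m)) (Y : 'M[RR]_(n, q))
    (M : T -> 'M[RR]_(m, n)) :
  (forall i j, continuous (fun t => M t i j)) ->
  forall i j, continuous (fun t => (X *m M t *m Y) i j).
Proof.
move=> M_cont i j.
have XM b : continuous (fun t => (X *m M t) i b).
  under eq_fun do rewrite mxE.
  apply: continuous_sum => a t.
  by apply: (@continuousM RR T); [exact: cst_continuous | exact: M_cont].
under eq_fun do rewrite mxE.
apply: continuous_sum => b t.
by apply: (@continuousM RR T); [exact: XM | exact: cst_continuous].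
Qed.

End EntrywiseContinuity.

Lemma normr_entry_le_frob2 m n (X : 'M[RR]_(m, n)) i j : `|X i j| <= 1 + frob2 X.
Proof.
have := entry_sqr_le_frob2 X i j; rewrite -[X i j ^+ 2]real_normK ?num_real //.
by have := normr_ge0 (X i j); nra.
Qed.

Local Open Scope classical_set_scope.

(* A minimizer exists by compactness: the matrices of rank [<= k] form a closed
   set, and only those at distance [<= frob2 B] from [B] (a bounded set) compete
   with [0]. Matrices are identified with row vectors through [vec_mx]. *)
Lemma best_rank_approx_exists m n k (B : 'M[RR]_(m, n)) :
  exists M, is_best_rank_approx k B M.
Proof.
have vec_cont i j : continuous (fun v : 'rV[RR]_(m * n) => vec_mx v i j).
  by under eq_fun do rewrite mxE; apply: coord_continuous.
have resid_cont : continuous (fun v : 'rV[RR]_(m * n) => frob2 (B - vec_mx v)).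
  apply: continuous_frob2 => i j; under eq_fun do rewrite !mxE.
  move=> v; apply: (@continuousB RR RR^o); first exact: cst_continuous.
  exact: coord_continuous.
pose K := [set v : 'rV[RR]_(m * n) | (\rank (vec_mx v) <= k)%N].
pose A := K `&` (fun v => frob2 (B - vec_mx v)) @^-1` [set x | x <= frob2 B].
have K_closed : closed K.
  have -> : K = \bigcap_(XY in [set: 'M[RR]_(k.+1, m) * 'M[RR]_(n, k.+1)])
      (fun v => \det (XY.1 *m vec_mx v *m XY.2)) @^-1` [set 0].
    apply/seteqP; split=> v /=; first by move/mxrank_leq_compressE => det0 XY _.
    by move=> det0; apply/mxrank_leq_compressE => X Y; apply: (det0 (X, Y)).
  apply: closed_bigI => XY _; apply: preimage_closed; last exact: closed_eq.
  move=> v _; apply: (@continuous_det _ _ (fun v => XY.1 *m vec_mx v *m XY.2)).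
  exact: continuous_mulmx_entry.
have A_closed : closed A.
  apply: closedI => //; apply: preimage_closed => [v _|]; first exact: resid_cont.
  exact: closed_le.
have A_bounded : bounded_set A.
  exists (2 * (1 + frob2 B)); split; first by rewrite num_real.
  move=> r r_gt v [_ /= Av]; rewrite [`|v|]/Num.norm /= mx_normrE.
  apply: bigmax_le => [|[a c] _ /=].
    by apply: le_trans (ltW r_gt); rewrite mulr_ge0 ?addr_ge0 ?frob2_ge0.
  apply: le_trans (ltW r_gt); rewrite ord1; case/mxvec_indexP: c => i j.
  have -> : v 0 (mxvec_index i j) = B i j - (B - vec_mx v) i j.
    by rewrite !mxE opprB addrC subrK.
  apply: le_trans (ler_normB _ _) _.
  have := normr_entry_le_frob2 B i j; have := normr_entry_le_frob2 (B - vec_mx v) i j.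
  by lra.
have A0 : A 0.
  have vec0 : vec_mx (0 : 'rV[RR]_(m * n)) = 0 by apply/eqP; rewrite vec_mx_eq0.
  by split; rewrite /K /= vec0 ?mxrank0 // subr0.
have [c] := compact_EVT_min (ex_intro _ _ A0)
  (bounded_closed_compact A_bounded A_closed) (continuous_subspaceT resid_cont).
rewrite inE => -[cK cB] cmin; exists (vec_mx c); split=> // N rNk.
have [NB|BN] := leP (frob2 (B - N)) (frob2 B); last exact: le_trans cB (ltW BN).
have := cmin (mxvec N); rewrite mxvecK; apply.
by rewrite inE; split; rewrite /K /= mxvecK.
Qed.

Lemma best_rank_approxP m n k (B : 'M[RR]_(m, n)) :
  is_best_rank_approx k B (best_rank_approx k B).
Proof. by apply: epsilon_spec; apply: best_rank_approx_exists. Qed.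

Local Close Scope classical_set_scope.

Theorem lemma5p5 :
  exists C : RR,
  forall (k d n : nat), (1 <= k)%N -> (k < d)%N -> (1 <= n)%N ->
  forall B : 'M[RR]_(n, d),
  exists f : 'I_k -> 'I_d, injective f /\
    frob2 (B - (B *m sel_mx f) *m pinv (B *m sel_mx f) *m B)
      <= C * (k * d)%:R * frob2 (B - best_rank_approx k B).
Proof.
exists 4 => k d n k_gt0 kd _ B.
have [rNk _] := best_rank_approxP k B.
have [f injf [C resid]] := sel_coef_residual_le B rNk (ltnW kd).
exists f; split=> //.
apply: le_trans (pinv_residual_min B C (pinvP _)) _.
apply: le_trans resid _; rewrite ler_wpM2r ?frob2_ge0 // -natrM ler_nat.
by nia.
Qed.
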